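(* There exists $C>0$ such that for all $N$ large enough $$\max_{x\in\mathbb T_N^d}\sup_{\eta\in\mathcal X_N}\Big|E^{\nu_\beta}[f_x\mid\eta_x^\ell]-\tilde f_x(\eta_x^\ell)+\frac{\chi(\eta_x^\ell)}{2\ell_*^d}\frac{\partial^2\tilde f_x}{\partial\rho^2}(\eta_x^\ell)\Big|\le\frac C{\ell^{2d}}.$$
   Context: $\mathbb T_N^d=(\mathbb Z/N\mathbb Z)^d$, $\mathcal X_N=\{0,1\}^{\mathbb T_N^d}$, $(\tau_x\eta)_z=\eta_{z+x}$, $\tau_xh(\eta)=h(\tau_x\eta)$. $\nu_\rho$ denotes the Bernoulli product measure of mean $\rho\in[0,1]$, and $\beta=\frac12$. $\chi(\rho)=\rho(1-\rho)$. $h$ is an $N$-independent local function (depending on finitely many coordinates, supported in a finite box), $\tilde h(\rho)=E^{\nu_\rho}[h]$. Time is fixed and suppressed: $u_x\in[u_-,u_+]$, $0<u_-<u_+<1$, are deterministic values and $f_x(\eta)=\tau_xh(\eta)-\tilde h(u_x)-\tilde h'(u_x)(\eta_x-u_x)$, $\tilde f_x(\rho)=E^{\nu_\rho}[f_x]$. $\ell=\ell(N)$ with $1\ll\ell\ll N$, $\ell_*=2\ell+1$, $\Lambda_{\ell,x}=\{y:|y-x|\le\ell\}$ (a cube with $\ell_*^d$ sites), $\eta_x^\ell=\ell_*^{-d}\sum_{y\in\Lambda_{\ell,x}}\eta_y$. *)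

From HB Require Import structures.
From mathcomp Require Import all_boot all_order all_algebra.
From mathcomp Require Import all_classical all_reals all_analysis.
Set Implicit Arguments. Unset Strict Implicit. Unset Printing Implicit Defensive.
Import Order.TTheory GRing.Theory Num.Theory.
Import numFieldNormedType.Exports.
Local Open Scope ring_scope.

Section Defs.
Context {R : realType}.

(* discrete torus T_N^d = (Z/NZ)^d ; 'Z_N coincides with Z/NZ for N >= 2,
   which is the only regime relevant for "N large enough" *)
Definition site (N d : nat) := {ffun 'I_d -> 'Z_N}.
Definition config (N d : nat) := {ffun site N d -> bool}.

(* the cube {-r,...,r}^d in Z^d, coordinate z_i = k_i - r *)
Definition cube (r d : nat) := {ffun 'I_d -> 'I_(2 * r + 1)}.

Definition shift (N d r : nat) (x : site N d) (k : cube r d) : site N d :=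
  x + [ffun i => (((k i : nat)%:Z - r%:Z)%:~R : 'Z_N)].

Definition occ (N d : nat) (eta : config N d) (y : site N d) : R :=
  (eta y)%:R.

(* a local function h is given by its support cube {-r..r}^d and
   H : {0,1}^{cube} -> R, h(eta) = H(eta restricted to the cube) *)
Definition local_fun (r d : nat) := {ffun cube r d -> bool} -> R.

Definition tau_h (N d r : nat) (H : local_fun r d) (x : site N d)
  (eta : config N d) : R :=
  H [ffun k => eta (shift x k)].

Definition nu (N d : nat) (rho : R) (eta : config N d) : R :=
  \prod_(z : site N d) (if eta z then rho else 1 - rho).

Definition Enu (N d : nat) (rho : R) (F : config N d -> R) : R :=
  \sum_(eta : config N d) nu rho eta * F eta.

(* htilde(rho) = E^{nu_rho}[h] (computed on the support cube of h) *)
Definition htilde (r d : nat) (H : local_fun r d) (rho : R) : R :=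
  \sum_(xi : {ffun cube r d -> bool})
     (\prod_(k : cube r d) (if xi k then rho else 1 - rho)) * H xi.

Definition fx (N d r : nat) (H : local_fun r d) (u : site N d -> R)
  (x : site N d) (eta : config N d) : R :=
  tau_h H x eta - htilde H (u x)
  - (derive1 (htilde H)) (u x) * (occ eta x - u x).

Definition ftilde (N d r : nat) (H : local_fun r d) (u : site N d -> R)
  (x : site N d) (rho : R) : R :=
  Enu rho (fx H u x).

Definition lstar (l : nat) : nat := 2 * l + 1.

Definition Lambda (N d l : nat) (x : site N d) : {set site N d} :=
  [set shift x k | k : cube l d].

Definition avg (N d l : nat) (x : site N d) (eta : config N d) : R :=
  ((lstar l ^ d)%:R)^-1 * \sum_(y in Lambda l x) occ eta y.

(* elementary conditional expectation E^{mu}[F | X] evaluated at eta,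
   on the finite space X_N with weights mu *)
Definition condE (N d : nat) (mu : config N d -> R) (F : config N d -> R)
  (X : config N d -> R) (eta : config N d) : R :=
  (\sum_(xi : config N d | X xi == X eta) mu xi * F xi)
  / (\sum_(xi : config N d | X xi == X eta) mu xi).

Definition chi (rho : R) : R := rho * (1 - rho).

End Defs.

From Pilot Require Import Defs.
From HB Require Import structures.
From mathcomp Require Import all_boot all_order all_algebra perm.
From mathcomp Require Import all_classical all_reals all_analysis.
From mathcomp Require Import ring lra zify.
(* Give [set0], [setP], [subsetP] back their finset meaning, which
   classical_sets shadows. *)
From mathcomp Require Import fintype finset.
Import Order.TTheory GRing.Theory Num.Theory.
Import numFieldNormedType.Exports.
Local Open Scope ring_scope.

(* Expand the local function in monomials, [h = \sum_J a_J \prod_(y in J) eta_y].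
   Under [nu_rho] a monomial of degree [j] has mean [rho ^ j], so [ftilde] is a
   polynomial in [rho].  Under [nu_(1/2)] conditioned on the box density
   [rho = K / n] (with [n = ell_*^d] sites, [K] of them occupied) the law of the
   box is uniform over the [K]-subsets, hence exchangeable: the conditional mean
   of a monomial supported in the box depends only on its degree, and double
   counting the pairs (monomial, configuration) shows it equals
   ['C(K, j) / 'C(n, j)].  Multiplying the factors [(K - i) / (n - i)] gives
   ['C(K, j) / 'C(n, j) = rho ^ j - 'C(j, 2) rho ^ (j - 1) (1 - rho) / n
   + O(j ^ 4 / n ^ 2)], and the middle term is exactly
   [chi rho / (2 n) * (rho ^ j)''].  The affine part of [f_x] cancels because
   the conditional mean of [eta_x] is [rho]; summing over the finitely many [J]
   and using [n ^ 2 >= ell ^ (2 d)] gives the bound. *)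

Section HypergeometricMoments.
Context {R : numFieldType}.

Definition hypergeom_moment (K n j : nat) : R := 'C(K, j)%:R / 'C(n, j)%:R.

Definition hypergeom_error (K n j : nat) : R :=
  let rho := K%:R / n%:R in
  hypergeom_moment K n j - rho ^+ j
  + (j * j.-1)%:R / 2 * rho ^+ j.-1 * (1 - rho) / n%:R.

Lemma hypergeom_moment0 K n : hypergeom_moment K n 0 = 1.
Proof. by rewrite /hypergeom_moment !bin0 divr1. Qed.

Lemma hypergeom_moment1 K n : hypergeom_moment K n 1 = K%:R / n%:R.
Proof. by rewrite /hypergeom_moment !bin1. Qed.

Lemma natr_binS (K j : nat) :
  ('C(K, j.+1)%:R : R) = 'C(K, j)%:R * (K%:R - j%:R) / j.+1%:R.
Proof.
have [ltKj|leKj] := ltnP K j; first by rewrite !bin_small ?mul0r // ltnW.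
apply: (@mulIf _ j.+1%:R); first by rewrite pnatr_eq0.
by rewrite mulfVK ?pnatr_eq0 // -natrM mulnC mul_bin_left natrM natrB // mulrC.
Qed.

Lemma hypergeom_momentS K n j : (j < n)%N ->
  hypergeom_moment K n j.+1
  = hypergeom_moment K n j * ((K%:R - j%:R) / (n%:R - j%:R)).
Proof.
move=> ltjn; rewrite /hypergeom_moment !natr_binS.
have Cnj0 : ('C(n, j)%:R : R) != 0 by rewrite pnatr_eq0 -lt0n bin_gt0 ltnW.
have nj0 : (n%:R - j%:R : R) != 0 by rewrite subr_eq0 eqr_nat neq_ltn ltjn orbT.
by field; rewrite Cnj0 nj0 -(natrD _ 1) pnatr_eq0.
Qed.

(* A further draw multiplies the moment by [(K - j) / (n - j) = rho - delta],
   with depletion [delta = j (1 - rho) / (n - j) = j (1 - rho) n q]. *)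
Lemma hypergeom_errorS K n j (nr := n%:R : R) (jr := j%:R : R)
    (rho := K%:R / nr) (q := (nr * (nr - jr))^-1) :
  (j < n)%N -> (0 < n)%N ->
  hypergeom_error K n j.+1
  = hypergeom_error K n j * (rho - jr * (1 - rho) * nr * q)
    + ((j * j.-1)%:R / 2 * rho ^+ j.-1 * jr * (1 - rho) ^+ 2
       - jr ^+ 2 * rho ^+ j * (1 - rho)) * q.
Proof.
move=> ltjn n0.
have nr0 : nr != 0 by rewrite pnatr_eq0 -lt0n.
have nj0 : nr - jr != 0 by rewrite subr_eq0 eqr_nat neq_ltn ltjn orbT.
have Kr : (K%:R : R) = rho * nr by rewrite mulfVK.
rewrite /hypergeom_error -/nr -/rho /= hypergeom_momentS // Kr -/jr /q.
rewrite !natrM; move: nj0; rewrite /jr; case: (j) => [|j'] nj0.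
  by rewrite !mul0r !mulr0 !mul0r; field.
by rewrite /= !mulrSr !exprS; field; rewrite -mulrSr nj0 nr0.
Qed.

End HypergeometricMoments.

Section HypergeometricBounds.
Context {R : realFieldType}.

Lemma hypergeom_remainder_le (rho jr c P Q : R) :
  0 <= rho <= 1 -> 0 <= jr -> 0 <= c <= jr ^+ 2 -> 0 <= P <= 1 -> 0 <= Q <= 1 ->
  `|c / 2 * P * jr * (1 - rho) ^+ 2 - jr ^+ 2 * Q * (1 - rho)| <= jr ^+ 3 / 2 + jr ^+ 2.
Proof.
move=> /andP[rho0 rho1] jr0 /andP[c0 c1] /andP[P0 P1] /andP[Q0 Q1].
have [s0 s1] : 0 <= (1 - rho) ^+ 2 /\ (1 - rho) ^+ 2 <= 1.
  by rewrite exprn_ge0 ?exprn_ile1 ?subr_ge0 // lerBlDr lerDl.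
have [a0 a1] : 0 <= c * P * (1 - rho) ^+ 2 /\ c * P * (1 - rho) ^+ 2 <= jr ^+ 2.
  split; first by apply: mulr_ge0 => //; apply: mulr_ge0.
  apply: le_trans (_ : c * P <= _); first by rewrite ler_piMr ?mulr_ge0.
  by rewrite -[_ ^+ 2]mulr1; apply: ler_pM.
have [b0 b1] : 0 <= Q * (1 - rho) /\ Q * (1 - rho) <= 1 by split; nra.
have -> : c / 2 * P * jr * (1 - rho) ^+ 2 - jr ^+ 2 * Q * (1 - rho)
          = c * P * (1 - rho) ^+ 2 * jr / 2 - jr ^+ 2 * (Q * (1 - rho)) by ring.
rewrite ler_norml exprS; apply/andP; split; nra.
Qed.

Lemma hypergeom_error_succ_bound K n j : (2 * j.+1 <= n)%N -> (K <= n)%N ->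
  `|hypergeom_error K n j.+1 : R|
  <= `|hypergeom_error K n j| + (j%:R ^+ 3 + 2 * j%:R ^+ 2) / n%:R ^+ 2.
Proof.
move=> hjn hKn; have n0 : (0 < n)%N by lia.
rewrite hypergeom_errorS //; last by lia.
set nr : R := n%:R; set jr : R := j%:R; set rho := K%:R / nr.
set q := (nr * (nr - jr))^-1.
have jr0 : 0 <= jr by rewrite ler0n.
have nr0 : 0 < nr by rewrite ltr0n.
have hj2 : 2 * jr + 2 <= nr.
  by rewrite /nr /jr -[2]/(2%:R) -natrM -natrD ler_nat; lia.
have rho01 : 0 <= rho <= 1.
  by rewrite divr_ge0 ?ler0n //= ler_pdivrMr // mul1r ler_nat.
have q0 : 0 < q by rewrite invr_gt0 mulr_gt0 // subr_gt0; lra.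
have q2 : q <= 2 / nr ^+ 2.
  rewrite /q -[2 / _]invf_div lef_pV2 ?posrE ?divr_gt0 ?exprn_gt0 ?mulr_gt0 //.
    by rewrite expr2; nra.
  by rewrite subr_gt0; lra.
have delta01 : 0 <= jr * (1 - rho) * nr * q <= 1.
  rewrite /q invfM mulrA mulfK ?gt_eqF //.
  by rewrite divr_ge0 ?mulr_ge0 ?ler_pdivrMr /= ?subr_gt0; nra.
have c_le : 0 <= ((j * j.-1)%:R : R) <= jr ^+ 2.
  by rewrite ler0n /jr -natrX ler_nat expnS expn1 leq_mul2l leq_pred orbT.
have rho_pow k : 0 <= rho ^+ k <= 1.
  by rewrite exprn_ge0 ?exprn_ile1 //; case/andP: rho01.
apply: le_trans (ler_normD _ _) (lerD _ _).
  rewrite normrM ler_piMr // ler_norml.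
  by move: rho01 delta01 => /andP[? ?] /andP[? ?]; lra.
rewrite normrM (gtr0_norm q0).
have := hypergeom_remainder_le _ _ _ _ _ rho01 jr0 c_le (rho_pow j.-1) (rho_pow j).
move=> /(ler_wpM2r (ltW q0)) /le_trans; apply.
apply: le_trans (ler_wpM2l _ q2) _; first by rewrite addr_ge0 ?divr_ge0 ?exprn_ge0.
by rewrite le_eqVlt; apply/orP; left; apply/eqP; field; rewrite gt_eqF.
Qed.

Lemma hypergeom_error_bound K n j : (2 * j <= n)%N -> (K <= n)%N ->
  `|hypergeom_error K n j : R| <= j%:R ^+ 4 / n%:R ^+ 2.
Proof.
move=> hjn hKn; elim: j hjn => [|j IHj] hjn.
  by rewrite /hypergeom_error hypergeom_moment0 expr0 subrr !mul0r add0r normr0.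
apply: le_trans (hypergeom_error_succ_bound _ _ _ hjn hKn) _.
apply: le_trans (lerD (IHj ltac:(lia)) (lexx _)) _.
have n0 : (0 < n)%N by lia.
rewrite -mulrDl ler_pM2r ?invr_gt0 ?exprn_gt0 ?ltr0n //.
have j0 : 0 <= (j%:R : R) by rewrite ler0n.
rewrite -natr1; nra.
Qed.

End HypergeometricBounds.

Section Monomials.
Context {R : comRingType} {T : finType}.
Implicit Types (Y J : {set T}) (xi zeta : {ffun T -> bool}).

Definition mono Y xi : R := \prod_(y in Y) (xi y)%:R.

Lemma mono_subset Y xi : mono Y xi = (Y \subset [set y | xi y])%:R.
Proof.
rewrite /mono; have [/subsetP YS|/subsetPn [y yY nxy]] := boolP (Y \subset _).
  by rewrite big1 // => y /YS; rewrite inE => ->.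
by rewrite (bigD1 y) //=; move: nxy; rewrite inE => /negPf ->; rewrite mul0r.
Qed.

Lemma mono0 xi : mono set0 xi = 1.
Proof. exact: big_set0. Qed.

Lemma mono1 y xi : mono [set y] xi = (xi y)%:R.
Proof. exact: big_set1. Qed.

(* The coefficient of [mono J xi] in the expansion of the indicator
   [\prod_k (if zeta k then xi k else 1 - xi k)] of [xi = zeta]. *)
Definition mobius_weight zeta J : R :=
  \prod_k (if k \in J then (if zeta k then 1 else -1)
           else (if zeta k then 0 else 1)).

Definition mobius (G : {ffun T -> bool} -> R) J : R :=
  \sum_zeta G zeta * mobius_weight zeta J.

Lemma indicator_mobius zeta xi :
  (xi == zeta)%:R = \sum_J mobius_weight zeta J * mono J xi.
Proof.
have -> : (xi == zeta)%:R = \prod_k ((if zeta k then 1 else -1) * (xi k)%:R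
                                    + (if zeta k then 0 else 1)) :> R.
  have [<-|/eqP neq] := eqVneq xi zeta.
    by rewrite big1 // => k _; case: (xi k) => /=; ring.
  have [k /eqP nk] : exists k, xi k != zeta k.
    by apply/existsP; rewrite -negb_forall; apply: contra_notN neq => /forallP h;
       apply/ffunP => k; apply/eqP.
  rewrite (bigD1 k) //=.
  by case: (xi k) (zeta k) nk => [] [] //= _;
    rewrite ?mulN1r ?addNr ?mulr0 ?addr0 mul0r.
rewrite bigA_distr; apply: eq_bigr => J _.
rewrite /mobius_weight /mono [X in _ = _ * X]big_mkcond -big_split /=.
by apply: eq_bigr => k _; case: (k \in J); rewrite /= ?mulr1.
Qed.

Lemma mobius_expansion G xi : G xi = \sum_J mobius G J * mono J xi.
Proof.
have -> : G xi = \sum_zeta G zeta * (xi == zeta)%:R.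
  rewrite (bigD1 xi) //= eqxx mulr1 big1 ?addr0 // => zeta /negPf.
  by rewrite eq_sym => ->; rewrite mulr0.
under eq_bigr do rewrite indicator_mobius mulr_sumr.
rewrite exchange_big; apply: eq_bigr => J _.
by rewrite /mobius mulr_suml; apply: eq_bigr => zeta _; rewrite mulrA.
Qed.

Lemma bernoulli_moment (rho : R) Y :
  \sum_(xi : {ffun T -> bool}) (\prod_z (if xi z then rho else 1 - rho)) * mono Y xi
  = rho ^+ #|Y|.
Proof.
under eq_bigr => xi _ do rewrite [mono _ _]big_mkcond -big_split /=.
rewrite -(bigA_distr_bigA (fun z b => (if b then rho else 1 - rho)
                                     * (if z \in Y then (b%:R : R) else 1))) /=.
under eq_bigr => z _ do rewrite big_bool /=.
rewrite -prodr_const [RHS]big_mkcond /=; apply: eq_bigr => z _.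
by case: (z \in Y) => /=; ring.
Qed.

End Monomials.

Lemma mono_imset {R : comRingType} {S T : finType} (f : S -> T) (J : {set S})
    (xi : {ffun T -> bool}) :
  injective f -> (mono (f @: J) xi : R) = mono J [ffun k => xi (f k)].
Proof.
move=> finj; rewrite /mono big_imset /=; last by move=> a b _ _ /finj.
by apply: eq_bigr => k _; rewrite ffunE.
Qed.

Lemma weighted_sum_mobius {R : comRingType} {S T : finType} (f : S -> T)
    (w : {ffun T -> bool} -> R) (G : {ffun S -> bool} -> R) : injective f ->
  \sum_xi w xi * G [ffun k => xi (f k)]
  = \sum_(J : {set S}) mobius G J * \sum_xi w xi * mono (f @: J) xi.
Proof.
move=> finj; under eq_bigr do rewrite (mobius_expansion G) mulr_sumr.
rewrite exchange_big; apply: eq_bigr => J _; rewrite mulr_sumr.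
by apply: eq_bigr => xi _; rewrite (mono_imset _ _ _ finj) mulrCA.
Qed.

Section CanonicalEnsemble.
Context {R : numFieldType} {T : finType} (B : {set T}).
Implicit Types (Y : {set T}) (xi : {ffun T -> bool}).

Definition occupancy xi : nat := #|B :&: [set y | xi y]|.

Definition mono_sum (K : nat) Y : R := \sum_(xi | occupancy xi == K) mono Y xi.

Lemma mono_sum_perm K Y s : perm_on B s -> mono_sum K Y = mono_sum K (s @: Y).
Proof.
move=> sB; pose act xi : {ffun T -> bool} := [ffun z => xi (s z)].
have act_inj : injective act.
  move=> xi1 xi2 /ffunP e; apply/ffunP => z.
  by have := e ((s^-1)%g z); rewrite !ffunE permKV.
rewrite /mono_sum (reindex_inj act_inj); apply: eq_big => [xi|xi _].
  rewrite /occupancy -[in RHS](card_preimset _ (@perm_inj _ s)).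
  by congr (_ == K); apply: eq_card => y; rewrite !inE ffunE (perm_closed _ sB).
by rewrite (mono_imset _ _ _ (@perm_inj _ s)).
Qed.

Lemma mono_sum_card K Y1 Y2 : Y1 \subset B -> Y2 \subset B -> #|Y1| = #|Y2| ->
  mono_sum K Y1 = mono_sum K Y2.
Proof.
move=> Y1B; have [k] := ubnP #|Y2 :\: Y1|; elim: k Y2 => // k IHk Y2 lt_k Y2B eqY.
have [Y21|[s sY]] := set_0Vmem (Y2 :\: Y1).
  have /eqP -> // : Y2 == Y1.
  by rewrite eqEcard -eqY leqnn andbT -setD_eq0 Y21.
have [t tY] : exists t, t \in Y1 :\: Y2.
  apply/set0Pn; rewrite -card_gt0.
  have : #|Y1 :\: Y2| = #|Y2 :\: Y1|.
    by have := cardsID Y2 Y1; have := cardsID Y1 Y2; rewrite setIC eqY; lia.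
  by move=> ->; rewrite card_gt0; apply/set0Pn; exists s.
move: sY tY; rewrite !inE => /andP[sY1 sY2] /andP[tY2 tY1].
have st_on : perm_on B (tperm s t).
  apply: subset_trans (tperm_on s t) _.
  by apply/subsetP => z; rewrite !inE => /orP[] /eqP ->;
     [apply: (subsetP Y2B) | apply: (subsetP Y1B)].
rewrite [RHS](mono_sum_perm K Y2 _ st_on); apply: IHk.
- suff : (#|(tperm s t @: Y2) :\: Y1| < #|Y2 :\: Y1|)%N by lia.
  rewrite (cardsD1 s (Y2 :\: Y1)) !inE sY1 sY2 ltnS.
  apply/subset_leq_card/subsetP => _ /setDP [/imsetP [w wY2 ->]] nY1.
  case: tpermP nY1 => [_|wt|ws _] nY1; first by rewrite tY1 in nY1.
    by rewrite wt (negPf tY2) in wY2.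
  by rewrite !inE wY2 nY1 !andbT; apply/eqP.
- by apply/subsetP => _ /imsetP [w wY2 ->]; rewrite (perm_closed _ st_on) (subsetP Y2B).
- by rewrite card_imset //; apply: perm_inj.
Qed.

Lemma sum_mono_draws xi j :
  \sum_(Y : {set T} | (Y \subset B) && (#|Y| == j)) mono Y xi
  = 'C(occupancy xi, j)%:R :> R.
Proof.
under eq_bigr do rewrite mono_subset.
rewrite /occupancy -cards_draws -sumr_const [RHS]big_mkcond [LHS]big_mkcond.
apply: eq_bigr => Y _ /=; rewrite inE subsetI.
by case: (Y \subset B); case: (Y \subset _); case: (#|Y| == j).
Qed.

Lemma mono_sum_double_count K Y : Y \subset B ->
  'C(#|B|, #|Y|)%:R * mono_sum K Y
  = #|[set xi | occupancy xi == K]|%:R * 'C(K, #|Y|)%:R.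
Proof.
move=> YB.
have -> : 'C(#|B|, #|Y|)%:R * mono_sum K Y
          = \sum_(Y' : {set T} | (Y' \subset B) && (#|Y'| == #|Y|)) mono_sum K Y'.
  rewrite (eq_bigr (fun _ => mono_sum K Y)); last first.
    by move=> Y' /andP[Y'B /eqP eqY]; apply: mono_sum_card.
  rewrite -cards_draws sumr_const mulr_natl; congr (_ *+ _).
  by apply: eq_card => Y'; rewrite inE.
rewrite /mono_sum exchange_big /=.
rewrite (eq_bigr (fun _ => 'C(K, #|Y|)%:R)); last first.
  by move=> xi /eqP <-; rewrite sum_mono_draws.
rewrite sumr_const mulr_natl; congr (_ *+ _).
by apply: eq_card => xi; rewrite inE.
Qed.

Definition canonical_mean K (F : {ffun T -> bool} -> R) : R :=
  (\sum_(xi | occupancy xi == K) F xi) / #|[set xi | occupancy xi == K]|%:R.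

Lemma canonical_meanE K F : canonical_mean K F
  = \sum_(xi : {ffun T -> bool})
      (occupancy xi == K)%:R / #|[set xi | occupancy xi == K]|%:R * F xi.
Proof.
rewrite /canonical_mean big_mkcond mulr_suml; apply: eq_bigr => xi _.
by case: (occupancy xi == K); rewrite ?mul0r ?mulr0 // mul1r mulrC.
Qed.

Lemma canonical_mean_mono eta Y : Y \subset B ->
  canonical_mean (occupancy eta) (mono Y)
  = hypergeom_moment (occupancy eta) #|B| #|Y|.
Proof.
move=> YB; set K := occupancy eta.
have W0 : #|[set xi | occupancy xi == K]|%:R != 0 :> R.
  by rewrite pnatr_eq0 -lt0n card_gt0; apply/set0Pn; exists eta; rewrite inE.
have C0 : 'C(#|B|, #|Y|)%:R != 0 :> R.
  by rewrite pnatr_eq0 -lt0n bin_gt0 subset_leq_card.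
apply: (mulfI C0); rewrite /canonical_mean /hypergeom_moment mulrA.
rewrite -/(mono_sum K Y) mono_sum_double_count //.
by field; rewrite W0 C0.
Qed.

End CanonicalEnsemble.

Section TorusBoxes.
Context {N d : nat}.
Implicit Types (x : site N d).

Lemma shift_inj r x : (2 * r < N)%N -> injective (@Defs.shift N d r x).
Proof.
move=> rN k k' /addrI /ffunP eq_kk'; apply/ffunP => i; apply: ord_inj.
have := eq_kk' i; rewrite !ffunE; have := ltn_ord (k i); have := ltn_ord (k' i).
move: (k i : nat) (k' i : nat) => a b hb ha.
case: r {k k' eq_kk'} rN ha hb => [|r] rN ha hb; first lia.
rewrite !intrB -!pmulrn => /addIr /(congr1 val) /=.
by rewrite !val_Zp_nat ?modn_small //; lia.
Qed.

Lemma card_Lambda l x : (2 * l < N)%N -> #|Lambda l x| = (lstar l ^ d)%N.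
Proof.
by move=> lN; rewrite card_imset ?card_ffun ?card_ord //; apply: shift_inj.
Qed.

Lemma shift_in_Lambda r l x (k : cube r d) :
  (r <= l)%N -> Defs.shift x k \in Lambda l x.
Proof.
move=> rl; have lt_k i : (k i + (l - r) < 2 * l + 1)%N by have := ltn_ord (k i); lia.
apply/imsetP; exists [ffun i => Ordinal (lt_k i)] => //.
rewrite /Defs.shift; congr (_ + _); apply/ffunP => i.
by rewrite !ffunE /=; congr (_%:~R); lia.
Qed.

Lemma center_in_Lambda l x : x \in Lambda l x.
Proof.
have center : Defs.shift x ([ffun => ord0] : cube 0 d) = x.
  by apply/ffunP => i; rewrite /Defs.shift !ffunE subrr mulr0z addr0.
by rewrite -{1}center shift_in_Lambda.
Qed.

Lemma avg_occupancy {R : realType} l x (xi : config N d) :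
  avg l x xi = (occupancy (Lambda l x) xi)%:R / (lstar l ^ d)%:R :> R.
Proof.
rewrite /avg /occ mulrC -natr_sum /occupancy -sum1_card; congr (_%:R / _).
rewrite big_mkcond [RHS]big_mkcond; apply: eq_bigr => y _.
by rewrite !inE; case: (y \in _); case: (xi y).
Qed.

Lemma condE_avg {R : realType} (F : config N d -> R) l x eta :
  condE (nu (1 / 2)) F (avg l x) eta
  = canonical_mean (Lambda l x) (occupancy (Lambda l x) eta) F.
Proof.
set B := Lambda l x; set K := occupancy B eta.
have n0 : (lstar l ^ d)%:R != 0 :> R by rewrite pnatr_eq0 expn_eq0 /lstar; lia.
have eq_avg (xi : config N d) :
    (avg l x xi == avg l x eta :> R) = (occupancy B xi == K).
  rewrite !avg_occupancy -subr_eq0 -mulrBl mulf_eq0 invr_eq0 (negPf n0) orbF.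
  by rewrite subr_eq0 eqr_nat.
have nu_half (xi : config N d) : nu (1 / 2) xi = (1 / 2 : R) ^+ #|site N d|.
  rewrite /nu (eq_bigr (fun=> 1 / 2)) ?prodr_const // => z _.
  by case: (xi z); rewrite // [X in X - _](splitr 1) addrK.
have den :
    \sum_(xi : config N d | avg l x xi == avg l x eta :> R) nu (1 / 2 : R) xi
    = (1 / 2 : R) ^+ #|site N d| * #|[set xi | occupancy B xi == K]|%:R.
  rewrite (eq_bigr _ (fun xi _ => nu_half xi)) sumr_const mulr_natr.
  by congr (_ *+ _); apply: eq_card => xi; rewrite inE -eq_avg.
have c0 : (1 / 2 : R) ^+ #|site N d| != 0 by rewrite expf_neq0.
rewrite /condE /canonical_mean den; under eq_bigl do rewrite eq_avg.
under eq_bigr do rewrite nu_half.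
by rewrite -mulr_sumr invfM mulrACA mulfV // mul1r.
Qed.

End TorusBoxes.

Section LocalFunctions.
Context {R : realType} {N d r : nat} (H : @local_fun R r d).
Implicit Types (x : site N d) (eta : config N d).

Definition hpoly : {poly R} := \sum_(J : {set cube r d}) mobius H J *: 'X^#|J|.

Lemma htilde_hpoly : htilde H = horner hpoly.
Proof.
apply: funext => rho; rewrite /htilde horner_sum.
under eq_bigr do rewrite (mobius_expansion H) mulr_sumr.
rewrite exchange_big; apply: eq_bigr => J _.
rewrite hornerZ hornerXn -(bernoulli_moment rho J) mulr_sumr.
by apply: eq_bigr => xi _; rewrite mulrCA.
Qed.

Lemma htildeE rho :
  htilde H rho = \sum_(J : {set cube r d}) mobius H J * rho ^+ #|J|.
Proof.
rewrite htilde_hpoly horner_sum; apply: eq_bigr => J _.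
by rewrite hornerZ hornerXn.
Qed.

Lemma Enu_tau_h x rho : injective (@Defs.shift N d r x) ->
  Enu rho (tau_h H x) = htilde H rho.
Proof.
move=> sinj; rewrite /Enu /tau_h (weighted_sum_mobius _ _ _ sinj) htildeE.
by apply: eq_bigr => J _; rewrite /nu bernoulli_moment card_imset.
Qed.

Lemma weighted_sum_fx (u : site N d -> R) x (w : config N d -> R) :
  \sum_eta w eta = 1 ->
  \sum_eta w eta * fx H u x eta
  = \sum_eta w eta * tau_h H x eta - htilde H (u x)
    - derive1 (htilde H) (u x) * (\sum_eta w eta * occ eta x - u x).
Proof.
move=> w1; set c0 := htilde H (u x); set c1 := derive1 (htilde H) (u x).
have e eta : w eta * fx H u x eta = w eta * tau_h H x eta - c0 * w eta
                                    - c1 * (w eta * occ eta x - u x * w eta).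
  by rewrite /fx -/c0 -/c1; ring.
rewrite (eq_bigr _ (fun eta _ => e eta)) !sumrB -!mulr_sumr sumrB -mulr_sumr w1.
by rewrite !mulr1.
Qed.

Lemma ftilde_affine (u : site N d -> R) x : injective (@Defs.shift N d r x) ->
  ftilde H u x
  = fun rho => htilde H rho - htilde H (u x)
                - derive1 (htilde H) (u x) * (rho - u x).
Proof.
move=> sinj; apply: funext => rho; rewrite /ftilde /Enu weighted_sum_fx.
- have := Enu_tau_h x rho sinj; rewrite /Enu => ->.
  congr (_ - _ - _ * (_ - _)).
  rewrite -[RHS]expr1 -[in RHS](cards1 x) -bernoulli_moment.
  by apply: eq_bigr => eta _; rewrite mono1.
- rewrite -(expr0 rho) -(cards0 (site N d)) -bernoulli_moment.
  by apply: eq_bigr => eta _; rewrite mono0 mulr1.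
Qed.

Lemma horner_hpoly_derivn n rho :
  (hpoly^`(n)).[rho]
  = \sum_(J : {set cube r d}) mobius H J * (rho ^+ (#|J| - n) *+ #|J| ^_ n).
Proof.
rewrite raddf_sum horner_sum; apply: eq_bigr => J _.
by rewrite /= derivnZ derivnXn hornerZ hornerMn hornerXn.
Qed.

Lemma derive2_ftilde (u : site N d -> R) x : injective (@Defs.shift N d r x) ->
  derive1n 2 (ftilde H u x) = horner hpoly^`(2).
Proof.
move=> sinj; rewrite ftilde_affine // htilde_hpoly.
set c0 := hpoly.[u x]; set c1 := derive1 (horner hpoly) (u x).
have -> : (fun rho => hpoly.[rho] - c0 - c1 * (rho - u x))
          = horner (hpoly - c0%:P - c1 *: ('X - (u x)%:P)).
  by apply: funext => rho; rewrite !hornerE.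
rewrite /derive1n /= -!derivE !(derivB, derivZ, derivX, derivC).
by rewrite !subr0 scaler0 subr0.
Qed.

Lemma hypergeom_error_chi (K n j : nat) (rho := K%:R / n%:R : R) :
  hypergeom_error K n j
  = hypergeom_moment K n j - rho ^+ j
    + chi rho / (2 * n%:R) * (rho ^+ (j - 2) *+ j ^_ 2).
Proof.
rewrite /hypergeom_error -/rho /chi; congr (_ + _).
case: j => [|[|j]]; first by rewrite ffact0n !mul0r mulr0.
  by rewrite ffact_small // mulr0n mulr0 !mul0r.
rewrite ffactnS ffactn1 -mulr_natr !natrM /= subn2 /= !exprS invfM; ring.
Qed.

Lemma condE_fx_sub_ftilde (u : site N d -> R) l x eta
    (K := occupancy (Lambda l x) eta) (n := (lstar l ^ d)%N) :
  (2 * l < N)%N -> (r <= l)%N ->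
  condE (nu (1 / 2)) (fx H u x) (avg l x) eta - ftilde H u x (avg l x eta)
  = \sum_(J : {set cube r d})
      mobius H J * (hypergeom_moment K n #|J| - avg l x eta ^+ #|J|).
Proof.
move=> lN rl; have sinj : injective (@Defs.shift N d r x) by apply: shift_inj; lia.
pose w (xi : config N d) := (occupancy (Lambda l x) xi == K)%:R
                            / #|[set xi | occupancy (Lambda l x) xi == K]|%:R :> R.
have w_mono (Y : {set site N d}) : Y \subset Lambda l x ->
    \sum_xi w xi * mono Y xi = hypergeom_moment K n #|Y|.
  by move=> YB; rewrite -canonical_meanE canonical_mean_mono // card_Lambda.
have w1 : \sum_xi w xi = 1.
  rewrite -(hypergeom_moment0 K n) -(cards0 (site N d)) -w_mono ?sub0set //.
  by apply: eq_bigr => xi _; rewrite mono0 mulr1.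
have w_occ : \sum_xi w xi * occ xi x = avg l x eta.
  rewrite avg_occupancy -/K -hypergeom_moment1 -(cards1 x).
  rewrite -w_mono ?sub1set ?center_in_Lambda //.
  by apply: eq_bigr => xi _; rewrite mono1.
have w_tau : \sum_xi w xi * tau_h H x xi
             = \sum_(J : {set cube r d}) mobius H J * hypergeom_moment K n #|J|.
  rewrite /tau_h (weighted_sum_mobius _ _ _ sinj); apply: eq_bigr => J _.
  rewrite w_mono ?card_imset //.
  by apply/subsetP => _ /imsetP [k _ ->]; apply: shift_in_Lambda.
rewrite condE_avg canonical_meanE -/K -/w weighted_sum_fx //.
rewrite w_tau w_occ ftilde_affine //=.
rewrite [htilde H (avg l x eta)]htildeE.
have -> : \sum_(J : {set cube r d}) mobius H J
            * (hypergeom_moment K n #|J| - avg l x eta ^+ #|J|)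
          = \sum_(J : {set cube r d}) mobius H J * hypergeom_moment K n #|J|
            - \sum_(J : {set cube r d}) mobius H J * avg l x eta ^+ #|J|.
  by rewrite -sumrB; apply: eq_bigr => J _; rewrite mulrBr.
by ring.
Qed.

Lemma condE_fx_bound (u : site N d -> R) l x eta :
  (2 * l < N)%N -> (r <= l)%N -> (2 * #|cube r d| <= lstar l ^ d)%N ->
  `| condE (nu (1 / 2)) (fx H u x) (avg l x) eta - ftilde H u x (avg l x eta)
     + chi (avg l x eta) / (2 * (lstar l ^ d)%:R)
       * derive1n 2 (ftilde H u x) (avg l x eta) |
  <= (\sum_(J : {set cube r d}) `|mobius H J|) * #|cube r d|%:R ^+ 4
     / (lstar l ^ d)%:R ^+ 2.
Proof.
move=> lN rl Mn; set n := (lstar l ^ d)%N; set K := occupancy (Lambda l x) eta.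
have sinj : injective (@Defs.shift N d r x) by apply: shift_inj; lia.
have Kn : (K <= n)%N by rewrite /n -(card_Lambda l x lN) subset_leq_card ?subsetIl.
rewrite condE_fx_sub_ftilde // derive2_ftilde // horner_hpoly_derivn.
rewrite avg_occupancy -/K -/n; set rho := K%:R / n%:R.
have -> : \sum_(J : {set cube r d})
              mobius H J * (hypergeom_moment K n #|J| - rho ^+ #|J|)
          + chi rho / (2 * n%:R)
            * \sum_(J : {set cube r d}) mobius H J * (rho ^+ (#|J| - 2) *+ #|J| ^_ 2)
          = \sum_(J : {set cube r d}) mobius H J * hypergeom_error K n #|J|.
  rewrite mulr_sumr -big_split; apply: eq_bigr => J _.
  by rewrite hypergeom_error_chi -/rho /= [RHS]mulrDr mulrCA.
rewrite -mulrA mulr_suml; apply: le_trans (ler_norm_sum _ _ _) _.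
apply: ler_sum => J _; rewrite normrM ler_wpM2l //.
have JM : (#|J| <= #|cube r d|)%N by rewrite max_card.
apply: le_trans (hypergeom_error_bound _ _ _ _ Kn) _; first lia.
have n0 : (0 < n)%N by rewrite expn_gt0 /lstar addn1.
by rewrite ler_pM2r ?invr_gt0 ?exprn_gt0 ?ltr0n // -!natrX ler_nat leq_exp2r.
Qed.

End LocalFunctions.

Local Open Scope classical_set_scope.
Local Open Scope ring_scope.

Lemma eventually_double_lt {R : realType} (ell : nat -> nat) :
  (fun N : nat => (ell N)%:R / N%:R : R) @ \oo --> (0 : R) ->
  exists N0, forall N, (N0 <= N)%N -> (2 * ell N < N)%N.
Proof.
move=> /cvgr_dist_lt /(_ (1 / 2) ltac:(by [])) [N0 _ hN0].
exists (maxn N0 1) => N; rewrite geq_max => /andP[/hN0 /= small N1].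
have N0r : 0 < (N%:R : R) by rewrite ltr0n.
move: small; rewrite sub0r normrN ger0_norm ?divr_ge0 ?ler0n // ltr_pdivrMr //.
by rewrite -(ltr_nat R) natrM; lra.
Qed.

Theorem lemma3p2 (R : realType) (d : nat) (hd : (0 < d)%N)
  (r : nat) (H : @local_fun R r d)
  (ell : nat -> nat)
  (hell_inf : forall M : nat, exists N0 : nat, forall N : nat,
                 (N0 <= N)%N -> (M <= ell N)%N)
  (hell_o : (fun N : nat => (ell N)%:R / N%:R : R) @ \oo --> (0 : R))
  (um up : R) (hum : 0 < um) (humup : um < up) (hup : up < 1)
  (u : forall N : nat, site N d -> R)
  (hu : forall (N : nat) (x : site N d), um <= u N x <= up) :
  exists C : R, 0 < C /\
  exists N0 : nat, forall N : nat, (N0 <= N)%N ->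
  forall (x : site N d) (eta : config N d),
    `| condE (nu (1 / 2)) (fx H (u N) x) (avg (ell N) x) eta
       - ftilde H (u N) x (avg (ell N) x eta)
       + chi (avg (ell N) x eta) / (2 * (lstar (ell N) ^ d)%:R)
         * derive1n 2 (ftilde H (u N) x) (avg (ell N) x eta) |
    <= C / ((ell N)%:R ^+ (2 * d)).
Proof.
set M := #|cube r d|; set A := \sum_(J : {set cube r d}) `|mobius H J|.
have A0 : 0 <= A by rewrite sumr_ge0.
have AM0 : 0 <= A * M%:R ^+ 4 by rewrite mulr_ge0 ?exprn_ge0.
exists (A * M%:R ^+ 4 + 1); split; first by rewrite ltr_wpDl.
have [N1 ell_large] := hell_inf (maxn (maxn r M) 1).
have [N2 ell_small] := eventually_double_lt _ hell_o.
exists (maxn N1 N2) => N.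
rewrite geq_max => /andP[/ell_large + /ell_small lN] x eta.
rewrite !geq_max => /andP[/andP[rl Ml] l1].
set l := ell N in lN rl Ml l1 *.
have Mn : (2 * M <= lstar l ^ d)%N.
  have : (lstar l ^ 1 <= lstar l ^ d)%N by apply: leq_pexp2l; rewrite /lstar; lia.
  by rewrite expn1 /lstar; lia.
apply: le_trans (condE_fx_bound H (u N) l x eta lN rl Mn) _.
rewrite -/A -/M.
have l0 : 0 < (l%:R : R) ^+ (2 * d) by rewrite exprn_gt0 // ltr0n.
have ln : (l%:R : R) ^+ (2 * d) <= (lstar l ^ d)%:R ^+ 2.
  by rewrite -!natrX ler_nat mulnC expnM !leq_exp2r // /lstar; lia.
apply: (@le_trans _ _ (A * M%:R ^+ 4 / l%:R ^+ (2 * d))).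
  by rewrite ler_wpM2l // lef_pV2 ?posrE // (lt_le_trans l0 ln).
by rewrite ler_pM2r ?invr_gt0 // lerDl.
Qed.
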